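(* Let $n\ge2$ and $\mathbf{a}=(a_1,\dots,a_n)\in\Delta^{(n)}$. Define $q_i=a_1+\cdots+a_i+(n-i)a_i$ for $1\le i\le n$ and $q_{n-1+i}=(i-1)a_i+a_i+\cdots+a_n$ for $1\le i\le n$ (these two definitions agree at $q_n=1$; and $q_1=na_1$, $q_{2n-1}=na_n$). Let $\mathbf{P}=(P_1,\dots,P_n)\colon[na_1,na_n]\to\mathbb{R}^n$ be the continuous map such that: (i) for $1\le i\le n-1$ and $q\in[q_i,q_{i+1}]$: $P_k(q)=a_k$ for $k\le i$, and $P_{i+1}(q)=\cdots=P_n(q)=a_i+(q-q_i)/(n-i)$; (ii) for $1\le i\le n-1$ and $q\in[q_{n-1+i},q_{n+i}]$: $P_1(q)=\cdots=P_i(q)=a_i+(q-q_{n-1+i})/i$, and $P_k(q)=a_k$ for $k\ge i+1$. Then $\mathbf{P}$ is a generalized $n$-system on $[na_1,na_n]$ and, for each $j=1,\dots,n-1$, \[ \inf_{q\in[na_1,na_n]}\psi_j\big(q^{-1}\mathbf{P}(q)\big)=\psi_j(\mathbf{a})\quad\text{and}\quad \sup_{q\in[na_1,na_n]}\psi_j\big(q^{-1}\mathbf{P}(q)\big)=\frac{j}{n}. \]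
   Context: $\Delta^{(n)}=\{(a_1,\dots,a_n)\in\mathbb{R}^n: 0<a_1<\cdots<a_n,\ a_1+\cdots+a_n=1\}$ and $\bar\Delta^{(n)}=\{(a_1,\dots,a_n)\in\mathbb{R}^n: 0\le a_1\le\cdots\le a_n,\ a_1+\cdots+a_n=1\}$. For $j=1,\dots,n$, $\psi_j\colon\bar\Delta^{(n)}\to\mathbb{R}$ is $\psi_j(a_1,\dots,a_n)=a_1+\cdots+a_j$. A map $\mathbf{P}\colon I\to\mathbb{R}^n$ on an interval $I\subseteq[0,\infty)$ with non-empty interior is continuous piecewise linear if it is continuous, the set of points of $I$ where it is not differentiable (including endpoints of $I$ lying in $I$) is discrete in $I$, and its derivative is locally constant off that set. A generalized $n$-system on $I$ is a continuous piecewise linear map $\mathbf{P}=(P_1,\dots,P_n)\colon I\to\mathbb{R}^n$ such that: (G1) for each $q\in I$, $0\le P_1(q)\le\cdots\le P_n(q)$ and $P_1(q)+\cdots+P_n(q)=q$; (G2) on each non-empty open subinterval $H$ of $I$ on which $\mathbf{P}$ is differentiable, there are integers $1\le \underline{r}\le\overline{r}\le n$ such that $P_{\underline r},\dots,P_{\overline r}$ coincide on $H$ and have slope $1/(\overline r-\underline r+1)$, while every other $P_j$ is constant on $H$; (G3) if $q$ is an interior point of $I$ where $\mathbf{P}$ is not differentiable, and $\underline r,\overline r,\underline s,\overline s$ are the integers with $P_j'(q^-)=1/(\overline r-\underline r+1)$ for $\underline r\le j\le\overline r$ and $P_j'(q^+)=1/(\overline s-\underline s+1)$ for $\underline s\le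 j\le \overline s$, and if $\underline r<\overline s$, then $P_{\underline r}(q)=\cdots=P_{\overline s}(q)$. *)

From Stdlib Require Import Reals Lra Lia.
Open Scope R_scope.

(* Vectors of R^n are encoded as functions nat -> R, using indices 1..n. *)

Fixpoint sum_to (f : nat -> R) (m : nat) : R :=
  match m with
  | O => 0
  | S p => sum_to f p + f (S p)
  end.

(* sum_range f m p = f m + ... + f p  (for 1 <= m <= p+1) *)
Definition sum_range (f : nat -> R) (m p : nat) : R :=
  sum_to f p - sum_to f (m - 1).

Definition in_Delta (n : nat) (a : nat -> R) : Prop :=
  0 < a 1%nat /\
  (forall k, (1 <= k)%nat -> (k < n)%nat -> a k < a (S k)) /\
  sum_to a n = 1.

Definition psi (j : nat) (v : nat -> R) : R := sum_to v j.

Definition left_deriv (f : R -> R) (q l : R) : Prop :=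
  forall eps, 0 < eps -> exists delta, 0 < delta /\
    forall t, q - delta < t < q -> Rabs ((f t - f q) / (t - q) - l) < eps.

Definition right_deriv (f : R -> R) (q l : R) : Prop :=
  forall eps, 0 < eps -> exists delta, 0 < delta /\
    forall t, q < t < q + delta -> Rabs ((f t - f q) / (t - q) - l) < eps.

(* P q k is the k-th coordinate P_k(q), 1 <= k <= n. *)

Definition inI (A B q : R) : Prop := A <= q <= B.

Definition diff_at (n : nat) (P : R -> nat -> R) (q : R) : Prop :=
  forall k, (1 <= k <= n)%nat -> exists l, derivable_pt_lim (fun t => P t k) q l.

Definition nondiff_pt (n : nat) (A B : R) (P : R -> nat -> R) (q : R) : Prop :=
  inI A B q /\ (q = A \/ q = B \/ ~ diff_at n P q).

Definition cont_pw_linear (n : nat) (A B : R) (P : R -> nat -> R) : Prop :=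
  (forall k, (1 <= k <= n)%nat -> forall q, inI A B q ->
     forall eps, 0 < eps -> exists delta, 0 < delta /\
       forall t, inI A B t -> Rabs (t - q) < delta -> Rabs (P t k - P q k) < eps) /\
  (forall x, inI A B x -> exists eps, 0 < eps /\
     forall t, inI A B t -> 0 < Rabs (t - x) < eps -> ~ nondiff_pt n A B P t) /\
  (forall q, inI A B q -> ~ nondiff_pt n A B P q -> exists eps, 0 < eps /\
     forall t, Rabs (t - q) < eps ->
       forall k, (1 <= k <= n)%nat -> forall l,
         derivable_pt_lim (fun s => P s k) q l -> derivable_pt_lim (fun s => P s k) t l).

Definition gen_n_system (n : nat) (A B : R) (P : R -> nat -> R) : Prop :=
  cont_pw_linear n A B P /\
  (forall q, inI A B q ->
     0 <= P q 1%nat /\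
     (forall k, (1 <= k)%nat -> (k < n)%nat -> P q k <= P q (S k)) /\
     sum_to (P q) n = q) /\
  (forall c d, A <= c -> c < d -> d <= B ->
     (forall t, c < t < d -> diff_at n P t) ->
     exists r1 r2, (1 <= r1)%nat /\ (r1 <= r2)%nat /\ (r2 <= n)%nat /\
       (forall k t, (r1 <= k <= r2)%nat -> c < t < d -> P t k = P t r1) /\
       (forall k t, (r1 <= k <= r2)%nat -> c < t < d ->
          derivable_pt_lim (fun s => P s k) t (1 / INR (r2 - r1 + 1))) /\
       (forall k t t', (1 <= k <= n)%nat -> ~ (r1 <= k <= r2)%nat ->
          c < t < d -> c < t' < d -> P t k = P t' k)) /\
  (forall q, A < q < B -> ~ diff_at n P q ->
     forall r1 r2 s1 s2,
       (1 <= r1)%nat -> (r1 <= r2)%nat -> (r2 <= n)%nat ->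
       (1 <= s1)%nat -> (s1 <= s2)%nat -> (s2 <= n)%nat ->
       (forall j, (r1 <= j <= r2)%nat ->
          left_deriv (fun s => P s j) q (1 / INR (r2 - r1 + 1))) ->
       (forall j, (s1 <= j <= s2)%nat ->
          right_deriv (fun s => P s j) q (1 / INR (s2 - s1 + 1))) ->
       (r1 < s2)%nat ->
       forall j, (r1 <= j <= s2)%nat -> P q j = P q r1).

Definition qlow (n : nat) (a : nat -> R) (i : nat) : R :=
  sum_to a i + INR (n - i) * a i.
(* q_{n-1+i} for 1 <= i <= n *)
Definition qhigh (n : nat) (a : nat -> R) (i : nat) : R :=
  INR (i - 1) * a i + sum_range a i n.

Definition P_conditions (n : nat) (a : nat -> R) (P : R -> nat -> R) : Prop :=
  (forall i, (1 <= i)%nat -> (i <= n - 1)%nat ->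
     forall q, qlow n a i <= q <= qlow n a (S i) ->
       (forall k, (1 <= k <= i)%nat -> P q k = a k) /\
       (forall k, (i + 1 <= k <= n)%nat -> P q k = a i + (q - qlow n a i) / INR (n - i))) /\
  (forall i, (1 <= i)%nat -> (i <= n - 1)%nat ->
     forall q, qhigh n a i <= q <= qhigh n a (S i) ->
       (forall k, (1 <= k <= i)%nat -> P q k = a i + (q - qhigh n a i) / INR i) /\
       (forall k, (i + 1 <= k <= n)%nat -> P q k = a k)).

Definition is_glb (E : R -> Prop) (m : R) : Prop :=
  (forall x, E x -> m <= x) /\ (forall b, (forall x, E x -> b <= x) -> b <= m).

(* The breakpoints q_1 < ... < q_(2n-1) cut [n a_1, n a_n] into pieces on each of
   which P is affine and exactly one block of consecutive coordinates moves, all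
   with the same slope; the moving block changes at every breakpoint, so these are
   precisely the points of non-differentiability, and (G1)-(G3) are read off the
   blocks.  For the extrema of psi_j(P(q)/q): the coordinates of P(q) are
   nondecreasing, so the first j of them sum to at most j q / n, with equality at
   q = n a_1 where P is constant; and the ratios P_k(q) / a_k are nonincreasing in
   k, which forces psi_j(P(q)) >= q psi_j(a), with equality at q = 1 where
   P(1) = a. *)

From Stdlib Require Import Reals Lra Lia Classical.
Open Scope R_scope.

Lemma sum_to_ext f g m :
  (forall k, (1 <= k <= m)%nat -> f k = g k) -> sum_to f m = sum_to g m.
Proof.
  induction m as [|m IH]; intros H; simpl; [reflexivity|].
  rewrite IH by (intros; apply H; lia); rewrite H by lia; reflexivity.
Qed.

Lemma sum_to_le f g m :
  (forall k, (1 <= k <= m)%nat -> f k <= g k) -> sum_to f m <= sum_to g m.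
Proof.
  induction m as [|m IH]; intros H; simpl; [lra|].
  assert (sum_to f m <= sum_to g m) by (apply IH; intros; apply H; lia).
  assert (f (S m) <= g (S m)) by (apply H; lia).
  lra.
Qed.

Lemma sum_to_scal c f m : sum_to (fun k => c * f k) m = c * sum_to f m.
Proof. induction m as [|m IH]; simpl; [|rewrite IH]; ring. Qed.

Lemma sum_to_const c m : sum_to (fun _ => c) m = INR m * c.
Proof. induction m as [|m IH]; simpl sum_to; [simpl; ring|]. rewrite IH, S_INR; ring. Qed.

Lemma sum_tail_le f g j m : (j <= m)%nat ->
  (forall k, (j < k <= m)%nat -> f k <= g k) ->
  sum_to f m - sum_to f j <= sum_to g m - sum_to g j.
Proof.
  induction m as [|m IH]; intros Hjm H; [replace j with 0%nat by lia; lra|].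
  destruct (Nat.eq_dec j (S m)) as [->|Hj]; [lra|].
  assert (sum_to f m - sum_to f j <= sum_to g m - sum_to g j)
    by (apply IH; [lia|]; intros; apply H; lia).
  assert (f (S m) <= g (S m)) by (apply H; lia).
  simpl; lra.
Qed.

Lemma sum_tail_ext f g j m : (j <= m)%nat ->
  (forall k, (j < k <= m)%nat -> f k = g k) ->
  sum_to f m - sum_to f j = sum_to g m - sum_to g j.
Proof.
  intros Hjm H.
  apply Rle_antisym; apply sum_tail_le; auto; intros k Hk; rewrite H by lia; lra.
Qed.

Lemma sum_tail_const f c j m : (j <= m)%nat ->
  (forall k, (j < k <= m)%nat -> f k = c) ->
  sum_to f m - sum_to f j = INR (m - j) * c.
Proof.
  intros Hjm H; rewrite (sum_tail_ext f (fun _ => c)), !sum_to_const by auto.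
  rewrite minus_INR by lia; ring.
Qed.

Lemma chain_le (v : nat -> R) n :
  (forall k, (1 <= k)%nat -> (k < n)%nat -> v k <= v (S k)) ->
  forall k k', (1 <= k)%nat -> (k <= k')%nat -> (k' <= n)%nat -> v k <= v k'.
Proof.
  intros H k k' Hk Hkk'; induction Hkk' as [|k' Hkk' IH]; intros Hn; [lra|].
  assert (v k <= v k') by (apply IH; lia).
  assert (v k' <= v (S k')) by (apply H; lia).
  lra.
Qed.

Lemma chain_lt (v : nat -> R) n :
  (forall k, (1 <= k)%nat -> (k < n)%nat -> v k < v (S k)) ->
  forall k k', (1 <= k)%nat -> (k < k')%nat -> (k' <= n)%nat -> v k < v k'.
Proof.
  intros H k k' Hk Hkk'; induction Hkk' as [|k' Hkk' IH]; intros Hn; [apply H; lia|].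
  assert (v k < v k') by (apply IH; lia).
  assert (v k' < v (S k')) by (apply H; lia).
  lra.
Qed.

Lemma prefix_average_le (v : nat -> R) j n : (1 <= j <= n)%nat ->
  (forall k, (1 <= k)%nat -> (k < n)%nat -> v k <= v (S k)) ->
  INR n * sum_to v j <= INR j * sum_to v n.
Proof.
  intros Hj Hv.
  assert (Hhead : sum_to v j <= INR j * v j).
  { rewrite <- sum_to_const; apply sum_to_le; intros; apply (chain_le v n); auto; lia. }
  assert (Htail : INR (n - j) * v j <= sum_to v n - sum_to v j).
  { rewrite <- (sum_tail_const (fun _ => v j) (v j) j n) by (auto; lia).
    apply sum_tail_le; [lia|]; intros; apply (chain_le v n); auto; lia. }
  pose proof (pos_INR j); pose proof (pos_INR (n - j)); rewrite minus_INR in * by lia.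
  nra.
Qed.

Lemma prefix_sum_cross_le (w v : nat -> R) j n : (1 <= j <= n)%nat ->
  (forall k, (1 <= k <= n)%nat -> 0 < w k) ->
  (forall k, (1 <= k)%nat -> (k < n)%nat -> v (S k) * w k <= v k * w (S k)) ->
  sum_to w j * sum_to v n <= sum_to w n * sum_to v j.
Proof.
  intros Hj Hw Hv.
  (* [v_k >= r w_k] up to [j] and [v_k <= r w_k] beyond, for the ratio [r] at [j]. *)
  set (r := v j / w j).
  assert (Hratio : forall k k', (1 <= k)%nat -> (k <= k')%nat -> (k' <= n)%nat ->
            v k' / w k' <= v k / w k).
  { intros k k' Hk Hkk' Hk'.
    enough (- (v k / w k) <= - (v k' / w k')) by lra.
    apply (chain_le (fun i => - (v i / w i)) n); auto.
    intros i Hi Hin; specialize (Hv i Hi Hin).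
    assert (0 < w i) by (apply Hw; lia); assert (0 < w (S i)) by (apply Hw; lia).
    apply Ropp_le_contravar, (Rmult_le_reg_r (w i * w (S i))); [nra|].
    field_simplify; lra. }
  assert (Hdecomp : forall k, (1 <= k <= n)%nat -> v k = v k / w k * w k)
    by (intros k Hk; assert (0 < w k) by (apply Hw; lia); field; lra).
  assert (Hhead : r * sum_to w j <= sum_to v j).
  { rewrite <- sum_to_scal; apply sum_to_le; intros k Hk.
    rewrite (Hdecomp k) by lia; apply Rmult_le_compat_r; [left; apply Hw; lia|].
    apply Hratio; lia. }
  assert (Htail : sum_to v n - sum_to v j <= r * (sum_to w n - sum_to w j)).
  { rewrite Rmult_minus_distr_l, <- !sum_to_scal; apply sum_tail_le; [lia|]; intros k Hk.
    rewrite (Hdecomp k) by lia; apply Rmult_le_compat_r; [left; apply Hw; lia|].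
    apply Hratio; lia. }
  assert (0 <= sum_to w j)
    by (rewrite <- (Rmult_0_r (INR j)), <- sum_to_const; apply sum_to_le; intros; left; apply Hw; lia).
  assert (0 <= sum_to w n - sum_to w j).
  { rewrite <- (Rmult_0_r (INR (n - j))), <- (sum_tail_const (fun _ => 0) 0 j n) by (auto; lia).
    apply sum_tail_le; [lia|]; intros; left; apply Hw; lia. }
  nra.
Qed.

Lemma derivable_pt_lim_affine c b sl t : derivable_pt_lim (fun s => c + sl * (s - b)) t sl.
Proof.
  intros eps Heps; exists (mkposreal _ Heps); intros h Hh _.
  replace ((c + sl * (t + h - b) - (c + sl * (t - b))) / h - sl) with 0 by (field; exact Hh).
  rewrite Rabs_R0; exact Heps.
Qed.

Lemma derivable_pt_lim_locally_affine f c b sl u v t : u < t < v ->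
  (forall s, u < s < v -> f s = c + sl * (s - b)) -> derivable_pt_lim f t sl.
Proof.
  intros Ht H; apply (derivable_pt_lim_locally_ext (fun s => c + sl * (s - b)) f t u v); auto.
  - intros; symmetry; auto.
  - apply derivable_pt_lim_affine.
Qed.

Lemma derivable_pt_lim_left_right f q l :
  derivable_pt_lim f q l -> left_deriv f q l /\ right_deriv f q l.
Proof.
  intros D; split; intros eps Heps; destruct (D eps Heps) as [[d Hd] Hdel];
    exists d; split; auto; intros t Ht; simpl in Hdel;
    specialize (Hdel (t - q)); replace (q + (t - q)) with t in Hdel by ring;
    apply Hdel; [lra| | lra|]; unfold Rabs; destruct (Rcase_abs (t - q)); lra.
Qed.

Lemma left_deriv_affine f q u c b sl l : u < q ->
  (forall s, u <= s <= q -> f s = c + sl * (s - b)) -> left_deriv f q l -> l = sl.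
Proof.
  intros Hq H D; apply NNPP; intros Hne.
  assert (He : 0 < Rabs (l - sl)) by (apply Rabs_pos_lt; lra).
  destruct (D _ He) as [d [Hd Hdel]].
  set (t := q - Rmin d (q - u) / 2).
  pose proof (Rmin_l d (q - u)); pose proof (Rmin_r d (q - u)).
  assert (0 < Rmin d (q - u)) by (apply Rmin_pos; lra).
  specialize (Hdel t ltac:(unfold t; lra)).
  rewrite (H t), (H q) in Hdel by (unfold t; lra).
  replace ((c + sl * (t - b) - (c + sl * (q - b))) / (t - q)) with sl in Hdel
    by (field; unfold t; lra).
  rewrite Rabs_minus_sym in Hdel; lra.
Qed.

Lemma right_deriv_affine f q v c b sl l : q < v ->
  (forall s, q <= s <= v -> f s = c + sl * (s - b)) -> right_deriv f q l -> l = sl.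
Proof.
  intros Hq H D; apply NNPP; intros Hne.
  assert (He : 0 < Rabs (l - sl)) by (apply Rabs_pos_lt; lra).
  destruct (D _ He) as [d [Hd Hdel]].
  set (t := q + Rmin d (v - q) / 2).
  pose proof (Rmin_l d (v - q)); pose proof (Rmin_r d (v - q)).
  assert (0 < Rmin d (v - q)) by (apply Rmin_pos; lra).
  specialize (Hdel t ltac:(unfold t; lra)).
  rewrite (H t), (H q) in Hdel by (unfold t; lra).
  replace ((c + sl * (t - b) - (c + sl * (q - b))) / (t - q)) with sl in Hdel
    by (field; unfold t; lra).
  rewrite Rabs_minus_sym in Hdel; lra.
Qed.

Lemma not_derivable_kink f q u v c1 b1 s1 c2 b2 s2 l : u < q < v ->
  (forall s, u <= s <= q -> f s = c1 + s1 * (s - b1)) ->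
  (forall s, q <= s <= v -> f s = c2 + s2 * (s - b2)) ->
  s1 <> s2 -> ~ derivable_pt_lim f q l.
Proof.
  intros Hq H1 H2 Hne D; apply derivable_pt_lim_left_right in D as [DL DR].
  apply Hne; rewrite <- (left_deriv_affine f q u c1 b1 s1 l),
    <- (right_deriv_affine f q v c2 b2 s2 l); auto; lra.
Qed.

(* [P] is affine on each piece [Q m, Q (S m)], 1 <= m < M, with slope vector
   [Sl m], and its slope vector changes at every interior breakpoint, so the
   points [Q 2], ..., [Q (M-1)] are exactly where [P] is not differentiable. *)
Record pw_affine (n M : nat) (Q : nat -> R) (Sl : nat -> nat -> R) (P : R -> nat -> R) : Prop := {
  pw_pieces : (2 <= M)%nat;
  pw_incr : forall m, (1 <= m)%nat -> (m < M)%nat -> Q m < Q (S m);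
  pw_affine_piece : forall m k q, (1 <= m)%nat -> (m < M)%nat -> (1 <= k <= n)%nat ->
    Q m <= q <= Q (S m) -> P q k = P (Q m) k + Sl m k * (q - Q m);
  pw_kink : forall m, (2 <= m)%nat -> (m < M)%nat ->
    exists k, (1 <= k <= n)%nat /\ Sl (m - 1)%nat k <> Sl m k }.

Section PiecewiseAffine.

Variables (n M : nat) (Q : nat -> R) (Sl : nat -> nat -> R) (P : R -> nat -> R).
Hypothesis HP : pw_affine n M Q Sl P.

Lemma pw_lt i j : (1 <= i)%nat -> (i < j)%nat -> (j <= M)%nat -> Q i < Q j.
Proof. apply (chain_lt Q M), (pw_incr _ _ _ _ _ HP). Qed.

Lemma pw_le i j : (1 <= i)%nat -> (i <= j)%nat -> (j <= M)%nat -> Q i <= Q j.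
Proof.
  intros Hi Hij Hj; destruct (Nat.eq_dec i j) as [->|]; [lra|].
  left; apply pw_lt; lia.
Qed.

Lemma pw_locate q : Q 1%nat <= q <= Q M ->
  (exists m, (1 <= m <= M)%nat /\ q = Q m) \/
  (exists m, (1 <= m)%nat /\ (m < M)%nat /\ Q m < q < Q (S m)).
Proof.
  intros Hq.
  enough (H : forall K, (1 <= K <= M)%nat -> q <= Q K ->
    (exists m, (1 <= m <= K)%nat /\ q = Q m) \/
    (exists m, (1 <= m)%nat /\ (m < K)%nat /\ Q m < q < Q (S m)))
    by (apply H; [pose proof (pw_pieces _ _ _ _ _ HP); lia | lra]).
  induction K as [|K IH]; intros HK HqK; [lia|].
  destruct (Nat.eq_dec K 0) as [->|HK0]; [left; exists 1%nat; split; [lia|lra]|].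
  destruct (Rle_or_lt q (Q K)) as [HqK'|HqK'].
  - destruct (IH ltac:(lia) HqK') as [[m Hm]|[m Hm]]; [left|right]; exists m; intuition lia.
  - destruct (Req_dec q (Q (S K))) as [E|E]; [left; exists (S K); split; auto; lia|].
    right; exists K; repeat split; lia || lra.
Qed.

Lemma pw_piece q : Q 1%nat <= q <= Q M ->
  exists m, (1 <= m)%nat /\ (m < M)%nat /\ Q m <= q <= Q (S m).
Proof.
  intros Hq; pose proof (pw_pieces _ _ _ _ _ HP).
  destruct (pw_locate q Hq) as [[m [Hm ->]]|[m [Hm1 [Hm2 Hm]]]].
  - destruct (Nat.eq_dec m M) as [->|].
    + exists (M - 1)%nat; replace (S (M - 1)) with M by lia.
      repeat split; try lia; [apply pw_le; lia | lra].
    + exists m; repeat split; try lia; [lra | apply pw_le; lia].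
  - exists m; repeat split; auto; lra.
Qed.

Lemma pw_derivable_inside m t k : (1 <= m)%nat -> (m < M)%nat ->
  Q m < t < Q (S m) -> (1 <= k <= n)%nat ->
  derivable_pt_lim (fun s => P s k) t (Sl m k).
Proof.
  intros Hm1 Hm2 Ht Hk.
  apply (derivable_pt_lim_locally_affine (fun s => P s k) (P (Q m) k) (Q m) _ (Q m) (Q (S m))); auto.
  intros s Hs; apply (pw_affine_piece _ _ _ _ _ HP); auto; lra.
Qed.

Lemma pw_diff_inside m t : (1 <= m)%nat -> (m < M)%nat ->
  Q m < t < Q (S m) -> diff_at n P t.
Proof. intros Hm1 Hm2 Ht k Hk; exists (Sl m k); apply pw_derivable_inside; auto. Qed.

Lemma pw_not_diff_breakpoint m : (2 <= m)%nat -> (m < M)%nat -> ~ diff_at n P (Q m).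
Proof.
  intros Hm1 Hm2 D; destruct (pw_kink _ _ _ _ _ HP m Hm1 Hm2) as [k [Hk Hne]].
  destruct (D k Hk) as [l Hl].
  assert (Q (m - 1)%nat < Q m) by (apply pw_lt; lia).
  assert (Q m < Q (S m)) by (apply pw_lt; lia).
  apply (not_derivable_kink (fun s => P s k) (Q m) (Q (m - 1)%nat) (Q (S m))
    (P (Q (m - 1)%nat) k) (Q (m - 1)%nat) (Sl (m - 1)%nat k) (P (Q m) k) (Q m) (Sl m k) l); auto.
  - intros s Hs; apply (pw_affine_piece _ _ _ _ _ HP); try lia.
    replace (S (m - 1)) with m by lia; lra.
  - intros s Hs; apply (pw_affine_piece _ _ _ _ _ HP); auto; lia.
Qed.

Lemma pw_left_deriv m k l : (2 <= m)%nat -> (m < M)%nat -> (1 <= k <= n)%nat ->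
  left_deriv (fun s => P s k) (Q m) l -> l = Sl (m - 1)%nat k.
Proof.
  intros Hm1 Hm2 Hk D.
  apply (left_deriv_affine (fun s => P s k) (Q m) (Q (m - 1)%nat) (P (Q (m - 1)%nat) k) (Q (m - 1)%nat));
    auto; [apply pw_lt; lia|].
  intros s Hs; apply (pw_affine_piece _ _ _ _ _ HP); try lia.
  replace (S (m - 1)) with m by lia; lra.
Qed.

Lemma pw_right_deriv m k l : (1 <= m)%nat -> (m < M)%nat -> (1 <= k <= n)%nat ->
  right_deriv (fun s => P s k) (Q m) l -> l = Sl m k.
Proof.
  intros Hm1 Hm2 Hk D.
  apply (right_deriv_affine (fun s => P s k) (Q m) (Q (S m)) (P (Q m) k) (Q m)); auto; [apply pw_lt; lia|].
  intros s Hs; apply (pw_affine_piece _ _ _ _ _ HP); auto.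
Qed.

Lemma pw_neighbourhood q : inI (Q 1%nat) (Q M) q ->
  exists d mL mR, 0 < d /\ (1 <= mL)%nat /\ (mL < M)%nat /\ (1 <= mR)%nat /\ (mR < M)%nat /\
   Q mL <= q <= Q (S mL) /\ Q mR <= q <= Q (S mR) /\
   (forall t, inI (Q 1%nat) (Q M) t -> q - d < t < q -> Q mL < t < Q (S mL)) /\
   (forall t, inI (Q 1%nat) (Q M) t -> q < t < q + d -> Q mR < t < Q (S mR)).
Proof.
  intros Hq; pose proof (pw_pieces _ _ _ _ _ HP); unfold inI in *.
  destruct (pw_locate q Hq) as [[m [Hm ->]]|[m [Hm1 [Hm2 Hm]]]].
  - destruct (Nat.eq_dec m 1) as [->|Hm1]; [|destruct (Nat.eq_dec m M) as [->|HmM]].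
    + assert (Q 1%nat < Q 2%nat) by (apply pw_lt; lia).
      exists (Q 2%nat - Q 1%nat), 1%nat, 1%nat; repeat split; try lia; try lra;
        intros t Ht Ht'; lra.
    + assert (Q (M - 1)%nat < Q M) by (apply pw_lt; lia).
      exists (Q M - Q (M - 1)%nat), (M - 1)%nat, (M - 1)%nat; replace (S (M - 1)) with M by lia.
      repeat split; try lia; try lra; intros t Ht Ht'; lra.
    + assert (Q (m - 1)%nat < Q m) by (apply pw_lt; lia).
      assert (Q m < Q (S m)) by (apply pw_lt; lia).
      exists (Rmin (Q m - Q (m - 1)%nat) (Q (S m) - Q m)), (m - 1)%nat, m.
      replace (S (m - 1)) with m by lia.
      pose proof (Rmin_l (Q m - Q (m - 1)%nat) (Q (S m) - Q m)).
      pose proof (Rmin_r (Q m - Q (m - 1)%nat) (Q (S m) - Q m)).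
      repeat split; try lia; try lra; apply Rmin_pos; lra.
  - exists (Rmin (q - Q m) (Q (S m) - q)), m, m.
    pose proof (Rmin_l (q - Q m) (Q (S m) - q)); pose proof (Rmin_r (q - Q m) (Q (S m) - q)).
    repeat split; try lia; try lra; apply Rmin_pos; lra.
Qed.

Lemma pw_continuous k : (1 <= k <= n)%nat -> forall q, inI (Q 1%nat) (Q M) q ->
  forall eps, 0 < eps -> exists delta, 0 < delta /\
    forall t, inI (Q 1%nat) (Q M) t -> Rabs (t - q) < delta -> Rabs (P t k - P q k) < eps.
Proof.
  intros Hk q Hq eps Heps.
  destruct (pw_neighbourhood q Hq) as [d [mL [mR [Hd [? [? [? [? [HqL [HqR [HL HR]]]]]]]]]]].
  set (K := Rabs (Sl mL k) + Rabs (Sl mR k) + 1).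
  pose proof (Rabs_pos (Sl mL k)); pose proof (Rabs_pos (Sl mR k)).
  assert (HK : 0 < K) by (unfold K; lra).
  assert (0 < eps / K) by (apply Rdiv_lt_0_compat; lra).
  exists (Rmin d (eps / K)); split; [apply Rmin_pos; lra|]; intros t Ht Htq.
  pose proof (Rmin_l d (eps / K)); pose proof (Rmin_r d (eps / K)).
  assert (Hlip : forall m, Q m <= t <= Q (S m) -> Q m <= q <= Q (S m) ->
            (1 <= m)%nat -> (m < M)%nat -> Rabs (Sl m k) <= K ->
            Rabs (P t k - P q k) < eps).
  { intros m Htm Hqm Hm1 Hm2 HSl.
    rewrite (pw_affine_piece _ _ _ _ _ HP m k t), (pw_affine_piece _ _ _ _ _ HP m k q) by auto.
    replace (P (Q m) k + Sl m k * (t - Q m) - (P (Q m) k + Sl m k * (q - Q m)))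
      with (Sl m k * (t - q)) by ring; rewrite Rabs_mult.
    assert (eps / K * K = eps) by (field; lra).
    pose proof (Rabs_pos (t - q)); nra. }
  apply Rabs_def2 in Htq; destruct (Rtotal_order t q) as [Hlt|[->|Hgt]].
  - apply (Hlip mL); auto; [specialize (HL t Ht ltac:(lra)); lra | unfold K; lra].
  - rewrite Rminus_diag, Rabs_R0; exact Heps.
  - apply (Hlip mR); auto; [specialize (HR t Ht ltac:(lra)); lra | unfold K; lra].
Qed.

Lemma pw_nondiff_discrete x : inI (Q 1%nat) (Q M) x -> exists eps, 0 < eps /\
  forall t, inI (Q 1%nat) (Q M) t -> 0 < Rabs (t - x) < eps -> ~ nondiff_pt n (Q 1%nat) (Q M) P t.
Proof.
  intros Hx.
  destruct (pw_neighbourhood x Hx) as [d [mL [mR [Hd [? [? [? [? [_ [_ [HL HR]]]]]]]]]]].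
  exists d; split; auto; intros t Ht [Ht0 Htx] [_ Hnd].
  assert (Hin : exists m, (1 <= m)%nat /\ (m < M)%nat /\ Q m < t < Q (S m)).
  { apply Rabs_def2 in Htx; destruct (Rtotal_order t x) as [Hlt|[->|Hgt]].
    - exists mL; repeat split; auto; apply HL; auto; lra.
    - rewrite Rminus_diag, Rabs_R0 in Ht0; lra.
    - exists mR; repeat split; auto; apply HR; auto; lra. }
  destruct Hin as [m [Hm1 [Hm2 Hm]]].
  assert (Q 1%nat <= Q m) by (apply pw_le; lia).
  assert (Q (S m) <= Q M) by (apply pw_le; lia).
  destruct Hnd as [E|[E|E]]; [lra | lra | apply E, (pw_diff_inside m); auto].
Qed.

Lemma pw_deriv_locally_const q : inI (Q 1%nat) (Q M) q ->
  ~ nondiff_pt n (Q 1%nat) (Q M) P q -> exists eps, 0 < eps /\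
  forall t, Rabs (t - q) < eps -> forall k, (1 <= k <= n)%nat -> forall l,
    derivable_pt_lim (fun s => P s k) q l -> derivable_pt_lim (fun s => P s k) t l.
Proof.
  intros Hq Hnd.
  destruct (pw_locate q Hq) as [[m [Hm ->]]|[m [Hm1 [Hm2 Hm]]]].
  - exfalso; apply Hnd; split; auto.
    destruct (Nat.eq_dec m 1) as [->|]; [now left|].
    destruct (Nat.eq_dec m M) as [->|]; [now right; left|].
    right; right; apply pw_not_diff_breakpoint; lia.
  - exists (Rmin (q - Q m) (Q (S m) - q)); split; [apply Rmin_pos; lra|].
    pose proof (Rmin_l (q - Q m) (Q (S m) - q)); pose proof (Rmin_r (q - Q m) (Q (S m) - q)).
    intros t Ht k Hk l Hl; apply Rabs_def2 in Ht.
    replace l with (Sl m k)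
      by (apply (uniqueness_limite (fun s => P s k) q); auto; apply pw_derivable_inside; auto).
    apply pw_derivable_inside; auto; lra.
Qed.

Lemma pw_cont_pw_linear : cont_pw_linear n (Q 1%nat) (Q M) P.
Proof.
  split; [|split]; [exact pw_continuous | exact pw_nondiff_discrete | exact pw_deriv_locally_const].
Qed.

Lemma pw_diff_interval_in_piece c d : Q 1%nat <= c -> c < d -> d <= Q M ->
  (forall t, c < t < d -> diff_at n P t) ->
  exists m, (1 <= m)%nat /\ (m < M)%nat /\ Q m <= c /\ d <= Q (S m).
Proof.
  intros Hc Hcd Hd HD; set (t0 := (c + d) / 2).
  destruct (pw_locate t0 ltac:(unfold t0; lra)) as [[m [Hm E]]|[m [Hm1 [Hm2 Hm]]]].
  - exfalso; destruct (Nat.eq_dec m 1) as [->|]; [unfold t0 in E; lra|].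
    destruct (Nat.eq_dec m M) as [->|]; [unfold t0 in E; lra|].
    apply (pw_not_diff_breakpoint m); try lia; rewrite <- E; apply HD; unfold t0; lra.
  - exists m; repeat split; auto.
    + destruct (Rle_or_lt (Q m) c) as [|Hlt]; auto; exfalso.
      destruct (Nat.eq_dec m 1) as [->|]; [lra|].
      apply (pw_not_diff_breakpoint m); try lia; apply HD; unfold t0 in Hm; lra.
    + destruct (Rle_or_lt d (Q (S m))) as [|Hlt]; auto; exfalso.
      destruct (Nat.eq_dec (S m) M) as [E|]; [rewrite E in Hlt; lra|].
      apply (pw_not_diff_breakpoint (S m)); try lia; apply HD; unfold t0 in Hm; lra.
Qed.

Lemma pw_nondiff_is_breakpoint q : Q 1%nat < q < Q M -> ~ diff_at n P q ->
  exists m, (2 <= m)%nat /\ (m < M)%nat /\ q = Q m.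
Proof.
  intros Hq HD; destruct (pw_locate q ltac:(lra)) as [[m [Hm E]]|[m [Hm1 [Hm2 Hm]]]].
  - exists m; destruct (Nat.eq_dec m 1) as [->|]; [lra|].
    destruct (Nat.eq_dec m M) as [->|]; [lra|]; repeat split; auto; lia.
  - exfalso; apply HD, (pw_diff_inside m); auto.
Qed.

End PiecewiseAffine.

(* Piece [m] of the map is [q_m, q_(m+1)], 1 <= m <= 2n-2; on it exactly the
   coordinates [moving_lo n m], ..., [moving_hi n m] move, with common slope. *)
Definition breakpoint (n : nat) (a : nat -> R) (m : nat) : R :=
  if (m <=? n)%nat then qlow n a m else qhigh n a (m - n + 1).

Definition moving_lo (n m : nat) : nat := if (m <? n)%nat then S m else 1%nat.
Definition moving_hi (n m : nat) : nat := if (m <? n)%nat then n else (m - n + 1)%nat.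

Definition slope (n m k : nat) : R :=
  if andb (moving_lo n m <=? k)%nat (k <=? moving_hi n m)%nat
  then 1 / INR (moving_hi n m - moving_lo n m + 1) else 0.

Lemma moving_lo_low n m : (m < n)%nat -> moving_lo n m = S m.
Proof. intros H; unfold moving_lo; rewrite (proj2 (Nat.ltb_lt _ _) H); reflexivity. Qed.
Lemma moving_hi_low n m : (m < n)%nat -> moving_hi n m = n.
Proof. intros H; unfold moving_hi; rewrite (proj2 (Nat.ltb_lt _ _) H); reflexivity. Qed.
Lemma moving_lo_high n m : (n <= m)%nat -> moving_lo n m = 1%nat.
Proof. intros H; unfold moving_lo; rewrite (proj2 (Nat.ltb_ge _ _) H); reflexivity. Qed.
Lemma moving_hi_high n m : (n <= m)%nat -> moving_hi n m = (m - n + 1)%nat.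
Proof. intros H; unfold moving_hi; rewrite (proj2 (Nat.ltb_ge _ _) H); reflexivity. Qed.

Lemma slope_moving n m k : (moving_lo n m <= k <= moving_hi n m)%nat ->
  slope n m k = 1 / INR (moving_hi n m - moving_lo n m + 1).
Proof.
  intros [H1 H2]; unfold slope.
  rewrite (proj2 (Nat.leb_le _ _) H1), (proj2 (Nat.leb_le _ _) H2); reflexivity.
Qed.

Lemma slope_fixed n m k : ~ (moving_lo n m <= k <= moving_hi n m)%nat -> slope n m k = 0.
Proof.
  intros H; unfold slope.
  destruct (Nat.leb_spec (moving_lo n m) k), (Nat.leb_spec k (moving_hi n m)); auto; lia.
Qed.

Lemma inv_INR_pos k : (1 <= k)%nat -> 0 < 1 / INR k.
Proof. intros; apply Rdiv_lt_0_compat; [lra | apply lt_0_INR; lia]. Qed.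

Section TheMap.

Variables (n : nat) (a : nat -> R) (P : R -> nat -> R).
Hypotheses (Hn : (2 <= n)%nat) (Ha : in_Delta n a) (HPc : P_conditions n a P).

Lemma a_lt k k' : (1 <= k)%nat -> (k < k')%nat -> (k' <= n)%nat -> a k < a k'.
Proof. destruct Ha as [_ [H _]]; apply (chain_lt a n H). Qed.

Lemma a_le k k' : (1 <= k)%nat -> (k <= k')%nat -> (k' <= n)%nat -> a k <= a k'.
Proof.
  intros Hk Hkk' Hk'; destruct (Nat.eq_dec k k') as [->|]; [lra|].
  left; apply a_lt; lia.
Qed.

Lemma a_pos k : (1 <= k <= n)%nat -> 0 < a k.
Proof.
  intros Hk; destruct Ha as [H0 _].
  assert (a 1%nat <= a k) by (apply a_le; lia); lra.
Qed.

Lemma qlow_last : qlow n a n = 1.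
Proof. destruct Ha as [_ [_ Hs]]; unfold qlow; rewrite Nat.sub_diag; simpl INR; lra. Qed.

Lemma qhigh_first : qhigh n a 1 = 1.
Proof. destruct Ha as [_ [_ Hs]]; unfold qhigh, sum_range; simpl; lra. Qed.

Lemma qlow_step i : (1 <= i)%nat -> (i < n)%nat ->
  qlow n a (S i) = qlow n a i + INR (n - i) * (a (S i) - a i).
Proof.
  intros; unfold qlow; simpl sum_to.
  replace (n - i)%nat with (S (n - S i)) by lia; rewrite S_INR; ring.
Qed.

Lemma qhigh_step i : (1 <= i)%nat ->
  qhigh n a (S i) = qhigh n a i + INR i * (a (S i) - a i).
Proof.
  intros; unfold qhigh, sum_range; destruct i as [|i]; [lia|].
  replace (S (S i) - 1)%nat with (S i) by lia; replace (S i - 1)%nat with i by lia.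
  simpl sum_to; rewrite S_INR; ring.
Qed.

Lemma breakpoint_low m : (m <= n)%nat -> breakpoint n a m = qlow n a m.
Proof. intros H; unfold breakpoint; rewrite (proj2 (Nat.leb_le _ _) H); reflexivity. Qed.

Lemma breakpoint_high m : (n <= m)%nat -> breakpoint n a m = qhigh n a (m - n + 1).
Proof.
  intros H; unfold breakpoint; destruct (Nat.leb_spec m n); [|reflexivity].
  replace m with n by lia; replace (n - n + 1)%nat with 1%nat by lia.
  rewrite qlow_last, qhigh_first; reflexivity.
Qed.

Lemma breakpoint_first : breakpoint n a 1 = INR n * a 1%nat.
Proof.
  rewrite breakpoint_low by lia; unfold qlow; simpl sum_to.
  rewrite minus_INR by lia; simpl INR; ring.
Qed.

Lemma breakpoint_last : breakpoint n a (2 * n - 1) = INR n * a n.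
Proof.
  rewrite breakpoint_high by lia; replace (2 * n - 1 - n + 1)%nat with n by lia.
  unfold qhigh, sum_range; destruct n as [|n']; [lia|].
  replace (S n' - 1)%nat with n' by lia; simpl sum_to; rewrite S_INR; ring.
Qed.

Lemma breakpoint_step m : (1 <= m)%nat -> (m < 2 * n - 1)%nat ->
  breakpoint n a m < breakpoint n a (S m).
Proof.
  intros H1 H2; destruct (Nat.lt_ge_cases m n).
  - rewrite !breakpoint_low, qlow_step by lia.
    assert (a m < a (S m)) by (apply a_lt; lia).
    assert (0 < INR (n - m)) by (apply lt_0_INR; lia); nra.
  - rewrite !breakpoint_high by lia; replace (S m - n + 1)%nat with (S (m - n + 1)) by lia.
    rewrite qhigh_step by lia.
    assert (a (m - n + 1)%nat < a (S (m - n + 1))) by (apply a_lt; lia).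
    assert (0 < INR (m - n + 1)) by (apply lt_0_INR; lia); nra.
Qed.

Lemma breakpoint_le i j : (1 <= i)%nat -> (i <= j)%nat -> (j <= 2 * n - 1)%nat ->
  breakpoint n a i <= breakpoint n a j.
Proof.
  intros Hi Hij Hj; apply (chain_le (breakpoint n a) (2 * n - 1)); auto.
  intros; left; apply breakpoint_step; lia.
Qed.

Lemma P_on_low_piece m q : (1 <= m)%nat -> (m < n)%nat ->
  breakpoint n a m <= q <= breakpoint n a (S m) ->
  forall k, (1 <= k <= n)%nat ->
  P q k = if (k <=? m)%nat then a k else a m + (q - qlow n a m) / INR (n - m).
Proof.
  intros Hm1 Hm2 Hq k Hk; rewrite !breakpoint_low in Hq by lia.
  destruct (proj1 HPc m Hm1 ltac:(lia) q Hq) as [H1 H2].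
  destruct (Nat.leb_spec k m); [apply H1 | apply H2]; lia.
Qed.

Lemma P_on_high_piece m q : (n <= m)%nat -> (m < 2 * n - 1)%nat ->
  breakpoint n a m <= q <= breakpoint n a (S m) ->
  forall k, (1 <= k <= n)%nat ->
  P q k = if (k <=? m - n + 1)%nat
          then a (m - n + 1)%nat + (q - qhigh n a (m - n + 1)) / INR (m - n + 1)
          else a k.
Proof.
  intros Hm1 Hm2 Hq k Hk; rewrite !breakpoint_high in Hq by lia.
  replace (S m - n + 1)%nat with (S (m - n + 1)) in Hq by lia.
  destruct (proj2 HPc (m - n + 1)%nat ltac:(lia) ltac:(lia) q Hq) as [H1 H2].
  destruct (Nat.leb_spec k (m - n + 1)); [apply H1 | apply H2]; lia.
Qed.

Lemma P_affine_on_piece m k q : (1 <= m)%nat -> (m < 2 * n - 1)%nat -> (1 <= k <= n)%nat ->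
  breakpoint n a m <= q <= breakpoint n a (S m) ->
  P q k = P (breakpoint n a m) k + slope n m k * (q - breakpoint n a m).
Proof.
  intros Hm1 Hm2 Hk Hq; pose proof (breakpoint_step m Hm1 Hm2).
  assert (Hq0 : breakpoint n a m <= breakpoint n a m <= breakpoint n a (S m)) by lra.
  destruct (Nat.lt_ge_cases m n).
  - rewrite (P_on_low_piece m q), (P_on_low_piece m (breakpoint n a m)), breakpoint_low by (auto; lia).
    destruct (Nat.leb_spec k m).
    + rewrite slope_fixed by (rewrite moving_lo_low; lia); ring.
    + rewrite slope_moving, moving_lo_low, moving_hi_low by (rewrite ?moving_lo_low, ?moving_hi_low; lia).
      replace (n - S m + 1)%nat with (n - m)%nat by lia.
      assert (0 < INR (n - m)) by (apply lt_0_INR; lia); field; lra.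
  - rewrite (P_on_high_piece m q), (P_on_high_piece m (breakpoint n a m)), breakpoint_high by (auto; lia).
    destruct (Nat.leb_spec k (m - n + 1)).
    + rewrite slope_moving, moving_lo_high, moving_hi_high
        by (rewrite ?moving_lo_high, ?moving_hi_high; lia).
      replace (m - n + 1 - 1 + 1)%nat with (m - n + 1)%nat by lia.
      assert (0 < INR (m - n + 1)) by (apply lt_0_INR; lia); field; lra.
    + rewrite slope_fixed by (rewrite moving_hi_high; lia); ring.
Qed.

Lemma slope_kink m : (2 <= m)%nat -> (m < 2 * n - 1)%nat ->
  exists k, (1 <= k <= n)%nat /\ slope n (m - 1) k <> slope n m k.
Proof.
  intros H1 H2.
  assert (Hmov : forall m1 m2 k, (moving_lo n m1 <= k <= moving_hi n m1)%nat ->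
            ~ (moving_lo n m2 <= k <= moving_hi n m2)%nat -> slope n m1 k <> slope n m2 k).
  { intros m1 m2 k Hin Hout; rewrite slope_moving, slope_fixed by auto.
    pose proof (inv_INR_pos (moving_hi n m1 - moving_lo n m1 + 1) ltac:(lia)); lra. }
  destruct (Nat.lt_ge_cases m n); [|destruct (Nat.eq_dec m n) as [->|]].
  - exists m; split; [lia|]; apply Hmov;
      rewrite ?moving_lo_low, ?moving_hi_low by lia; lia.
  - exists n; split; [lia|]; apply Hmov;
      rewrite ?moving_lo_low, ?moving_hi_low, ?moving_lo_high, ?moving_hi_high by lia; lia.
  - exists (m - n + 1)%nat; split; [lia|].
    apply not_eq_sym, Hmov;
      rewrite ?moving_lo_high, ?moving_hi_high by lia; lia.
Qed.

Lemma P_pw_affine : pw_affine n (2 * n - 1) (breakpoint n a) (slope n) P.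
Proof.
  split; [lia | intros; apply breakpoint_step; lia | exact P_affine_on_piece | exact slope_kink].
Qed.

Lemma P_moving_block_eq m k q : (1 <= m)%nat -> (m < 2 * n - 1)%nat ->
  (moving_lo n m <= k <= moving_hi n m)%nat ->
  breakpoint n a m <= q <= breakpoint n a (S m) -> P q k = P q (moving_lo n m).
Proof.
  intros Hm1 Hm2 Hk Hq; destruct (Nat.lt_ge_cases m n).
  - rewrite moving_lo_low, moving_hi_low in * by lia.
    rewrite !(P_on_low_piece m q) by (auto; lia).
    destruct (Nat.leb_spec k m), (Nat.leb_spec (S m) m); lia || reflexivity.
  - rewrite moving_lo_high, moving_hi_high in * by lia.
    rewrite !(P_on_high_piece m q) by (auto; lia).
    destruct (Nat.leb_spec k (m - n + 1)), (Nat.leb_spec 1 (m - n + 1)); lia || reflexivity.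
Qed.

Lemma slope_pos_moving m k : 0 < slope n m k -> (moving_lo n m <= k <= moving_hi n m)%nat.
Proof.
  intros H; apply NNPP; intros Hout; rewrite slope_fixed in H by exact Hout; lra.
Qed.

Lemma P_shape q : INR n * a 1%nat <= q <= INR n * a n ->
  exists i x, (1 <= i < n)%nat /\ a i <= x <= a (S i) /\
   ((q = qlow n a i + INR (n - i) * (x - a i) /\
     forall k, (1 <= k <= n)%nat -> P q k = if (k <=? i)%nat then a k else x) \/
    (q = qhigh n a i + INR i * (x - a i) /\
     forall k, (1 <= k <= n)%nat -> P q k = if (k <=? i)%nat then x else a k)).
Proof.
  intros Hq; rewrite <- breakpoint_first, <- breakpoint_last in Hq.
  destruct (pw_piece _ _ _ _ _ P_pw_affine q Hq) as [m [Hm1 [Hm2 Hqm]]].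
  destruct (Nat.lt_ge_cases m n).
  - pose proof (P_on_low_piece m q Hm1 H Hqm) as HPq.
    rewrite !breakpoint_low, qlow_step in Hqm by lia.
    assert (0 < INR (n - m)) by (apply lt_0_INR; lia).
    set (t := (q - qlow n a m) / INR (n - m)).
    assert (Ht : INR (n - m) * t = q - qlow n a m) by (unfold t; field; lra).
    exists m, (a m + t); split; [lia|]; split; [nra|].
    left; split; [lra | exact HPq].
  - pose proof (P_on_high_piece m q H Hm2 Hqm) as HPq.
    rewrite !breakpoint_high in Hqm by lia.
    replace (S m - n + 1)%nat with (S (m - n + 1)) in Hqm by lia.
    rewrite qhigh_step in Hqm by lia.
    assert (0 < INR (m - n + 1)) by (apply lt_0_INR; lia).
    set (t := (q - qhigh n a (m - n + 1)) / INR (m - n + 1)) in *.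
    assert (Ht : INR (m - n + 1) * t = q - qhigh n a (m - n + 1)) by (unfold t; field; lra).
    exists (m - n + 1)%nat, (a (m - n + 1)%nat + t); split; [lia|]; split; [nra|].
    right; split; [lra | exact HPq].
Qed.

Lemma P_G1 q : INR n * a 1%nat <= q <= INR n * a n ->
  0 <= P q 1%nat /\ (forall k, (1 <= k)%nat -> (k < n)%nat -> P q k <= P q (S k)) /\
  sum_to (P q) n = q.
Proof.
  intros Hq; destruct (P_shape q Hq) as [i [x [Hi [Hx [[Eq HPq]|[Eq HPq]]]]]].
  - split; [|split].
    + rewrite HPq by lia; destruct (Nat.leb_spec 1 i); [left; apply a_pos|]; lia.
    + intros k Hk1 Hk2; rewrite !HPq by lia.
      destruct (Nat.leb_spec k i), (Nat.leb_spec (S k) i); try lia; try lra.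
      * apply a_le; lia.
      * replace k with i by lia; lra.
    + assert (Hhead : sum_to (P q) i = sum_to a i).
      { apply sum_to_ext; intros k Hk; rewrite HPq by lia.
        destruct (Nat.leb_spec k i); [reflexivity | lia]. }
      assert (Htail : sum_to (P q) n - sum_to (P q) i = INR (n - i) * x).
      { apply sum_tail_const; [lia|]; intros k Hk; rewrite HPq by lia.
        destruct (Nat.leb_spec k i); [lia | reflexivity]. }
      replace (sum_to (P q) n) with (sum_to a i + INR (n - i) * x) by lra.
      rewrite Eq; unfold qlow; ring.
  - split; [|split].
    + rewrite HPq by lia; destruct (Nat.leb_spec 1 i); [|lia].
      assert (0 < a i) by (apply a_pos; lia); lra.
    + intros k Hk1 Hk2; rewrite !HPq by lia.
      destruct (Nat.leb_spec k i), (Nat.leb_spec (S k) i); try lia; try lra.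
      * replace k with i by lia; lra.
      * apply a_le; lia.
    + assert (Hhead : sum_to (P q) i = INR i * x).
      { rewrite <- sum_to_const; apply sum_to_ext; intros k Hk; rewrite HPq by lia.
        destruct (Nat.leb_spec k i); [reflexivity | lia]. }
      assert (Htail : sum_to (P q) n - sum_to (P q) i = sum_to a n - sum_to a i).
      { apply sum_tail_ext; [lia|]; intros k Hk; rewrite HPq by lia.
        destruct (Nat.leb_spec k i); [lia | reflexivity]. }
      replace (sum_to (P q) n) with (INR i * x + sum_to a n - sum_to a i) by lra.
      rewrite Eq; unfold qhigh, sum_range; destruct i as [|i]; [lia|].
      replace (S i - 1)%nat with i by lia; simpl sum_to; rewrite S_INR; ring.
Qed.

(* Cross-multiplied form of: [P_k(q) / a_k] is nonincreasing in [k]. *)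
Lemma P_ratio_step q k : INR n * a 1%nat <= q <= INR n * a n -> (1 <= k)%nat -> (k < n)%nat ->
  P q (S k) * a k <= P q k * a (S k).
Proof.
  intros Hq Hk1 Hk2; destruct (P_shape q Hq) as [i [x [Hi [Hx [[_ HPq]|[_ HPq]]]]]];
    assert (0 < a k) by (apply a_pos; lia); assert (0 < a (S k)) by (apply a_pos; lia);
    assert (a k < a (S k)) by (apply a_lt; lia); assert (0 < a i) by (apply a_pos; lia);
    rewrite !HPq by lia;
    destruct (Nat.leb_spec k i), (Nat.leb_spec (S k) i); try lia;
    solve [nra | replace k with i in * by lia; nra].
Qed.

Lemma P_G2 c d : INR n * a 1%nat <= c -> c < d -> d <= INR n * a n ->
  (forall t, c < t < d -> diff_at n P t) ->
  exists r1 r2, (1 <= r1)%nat /\ (r1 <= r2)%nat /\ (r2 <= n)%nat /\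
    (forall k t, (r1 <= k <= r2)%nat -> c < t < d -> P t k = P t r1) /\
    (forall k t, (r1 <= k <= r2)%nat -> c < t < d ->
       derivable_pt_lim (fun s => P s k) t (1 / INR (r2 - r1 + 1))) /\
    (forall k t t', (1 <= k <= n)%nat -> ~ (r1 <= k <= r2)%nat ->
       c < t < d -> c < t' < d -> P t k = P t' k).
Proof.
  intros Hc Hcd Hd HD; rewrite <- breakpoint_first in Hc; rewrite <- breakpoint_last in Hd.
  destruct (pw_diff_interval_in_piece _ _ _ _ _ P_pw_affine c d Hc Hcd Hd HD)
    as [m [Hm1 [Hm2 [Hcm Hdm]]]].
  assert (Hblock : (1 <= moving_lo n m)%nat /\ (moving_lo n m <= moving_hi n m <= n)%nat).
  { destruct (Nat.lt_ge_cases m n);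
      rewrite ?moving_lo_low, ?moving_hi_low, ?moving_lo_high, ?moving_hi_high by lia; lia. }
  exists (moving_lo n m), (moving_hi n m); repeat split; try lia.
  - intros k t Hk Ht; apply (P_moving_block_eq m); auto; lra.
  - intros k t Hk Ht; rewrite <- (slope_moving n m k Hk).
    apply (pw_derivable_inside _ _ _ _ _ P_pw_affine); auto; [lra | lia].
  - intros k t t' Hk Hout Ht Ht'.
    rewrite (P_affine_on_piece m k t), (P_affine_on_piece m k t'), slope_fixed by (auto; lra).
    ring.
Qed.

Lemma P_G3 q : INR n * a 1%nat < q < INR n * a n -> ~ diff_at n P q ->
  forall r1 r2 s1 s2,
    (1 <= r1)%nat -> (r1 <= r2)%nat -> (r2 <= n)%nat ->
    (1 <= s1)%nat -> (s1 <= s2)%nat -> (s2 <= n)%nat ->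
    (forall j, (r1 <= j <= r2)%nat -> left_deriv (fun s => P s j) q (1 / INR (r2 - r1 + 1))) ->
    (forall j, (s1 <= j <= s2)%nat -> right_deriv (fun s => P s j) q (1 / INR (s2 - s1 + 1))) ->
    (r1 < s2)%nat -> forall j, (r1 <= j <= s2)%nat -> P q j = P q r1.
Proof.
  intros Hq HD r1 r2 s1 s2 Hr1 Hr12 Hr2 Hs1 Hs12 Hs2 HL HR Hrs j Hj.
  rewrite <- breakpoint_first, <- breakpoint_last in Hq.
  destruct (pw_nondiff_is_breakpoint _ _ _ _ _ P_pw_affine q Hq HD) as [m [Hm1 [Hm2 ->]]].
  assert (Hr1_moving : (moving_lo n (m - 1) <= r1 <= moving_hi n (m - 1))%nat).
  { apply slope_pos_moving.
    rewrite <- (pw_left_deriv _ _ _ _ _ P_pw_affine m r1 _ Hm1 Hm2 ltac:(lia) (HL r1 ltac:(lia))).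
    apply inv_INR_pos; lia. }
  assert (Hs2_moving : (moving_lo n m <= s2 <= moving_hi n m)%nat).
  { apply slope_pos_moving.
    rewrite <- (pw_right_deriv _ _ _ _ _ P_pw_affine m s2 _ ltac:(lia) Hm2 ltac:(lia) (HR s2 ltac:(lia))).
    apply inv_INR_pos; lia. }
  assert (Hprev : breakpoint n a (m - 1) <= breakpoint n a m <= breakpoint n a (S (m - 1)))
    by (replace (S (m - 1)) with m by lia; split; [apply breakpoint_le; lia | lra]).
  assert (Hnext : breakpoint n a m <= breakpoint n a m <= breakpoint n a (S m))
    by (split; [lra | apply breakpoint_le; lia]).
  destruct (Nat.lt_ge_cases m n); [|destruct (Nat.eq_dec m n) as [->|]].
  - rewrite moving_lo_low, moving_hi_low in Hr1_moving by lia.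
    rewrite moving_hi_low in Hs2_moving by lia.
    transitivity (P (breakpoint n a m) (moving_lo n (m - 1))); [|symmetry];
      apply P_moving_block_eq; auto; try lia; rewrite moving_lo_low, moving_hi_low; lia.
  - rewrite moving_lo_low in Hr1_moving by lia.
    rewrite moving_hi_high in Hs2_moving by lia; lia.
  - rewrite moving_lo_high, moving_hi_high in Hs2_moving by lia.
    transitivity (P (breakpoint n a m) (moving_lo n m)); [|symmetry];
      apply P_moving_block_eq; auto; try lia; rewrite moving_lo_high, moving_hi_high; lia.
Qed.

Lemma P_gen_n_system : gen_n_system n (INR n * a 1%nat) (INR n * a n) P.
Proof.
  split; [|split; [exact P_G1 | split; [exact P_G2 | exact P_G3]]].
  rewrite <- breakpoint_first, <- breakpoint_last.
  exact (pw_cont_pw_linear _ _ _ _ _ P_pw_affine).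
Qed.

Lemma P_at_one k : (1 <= k <= n)%nat -> P 1 k = a k.
Proof.
  intros Hk; rewrite <- qhigh_first.
  assert (a 1%nat < a 2%nat) by (apply a_lt; lia).
  pose proof (qhigh_step 1 ltac:(lia)); simpl INR in *.
  destruct (proj2 HPc 1%nat ltac:(lia) ltac:(lia) (qhigh n a 1) ltac:(lra)) as [Hmove Hfix].
  destruct (Nat.le_gt_cases k 1); [|apply Hfix; lia].
  replace k with 1%nat by lia; rewrite Hmove by lia; simpl INR; field.
Qed.

Lemma P_at_start k : (1 <= k <= n)%nat -> P (INR n * a 1%nat) k = a 1%nat.
Proof.
  intros Hk; rewrite <- breakpoint_first, breakpoint_low by lia.
  assert (a 1%nat < a 2%nat) by (apply a_lt; lia).
  assert (0 < INR (n - 1)) by (apply lt_0_INR; lia).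
  pose proof (qlow_step 1 ltac:(lia) ltac:(lia)).
  destruct (proj1 HPc 1%nat ltac:(lia) ltac:(lia) (qlow n a 1) ltac:(nra)) as [Hfix Hmove].
  destruct (Nat.le_gt_cases k 1); [replace k with 1%nat by lia; apply Hfix; lia|].
  rewrite Hmove by lia; field; lra.
Qed.

Lemma start_pos : 0 < INR n * a 1%nat.
Proof.
  assert (0 < a 1%nat) by (apply a_pos; lia).
  assert (0 < INR n) by (apply lt_0_INR; lia); nra.
Qed.

Lemma psi_glb j : (1 <= j)%nat -> (j <= n - 1)%nat ->
  is_glb (fun x => exists q, INR n * a 1%nat <= q <= INR n * a n /\
                      x = psi j (fun k => / q * P q k))
         (psi j a).
Proof.
  intros Hj1 Hj2; pose proof start_pos; split.
  - intros x [q [Hq ->]]; destruct (P_G1 q Hq) as [_ [_ Hsum]].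
    pose proof (prefix_sum_cross_le a (P q) j n ltac:(lia) a_pos (fun k => P_ratio_step q k Hq))
      as Hcross.
    destruct Ha as [_ [_ Hs]]; rewrite Hsum, Hs in Hcross.
    unfold psi; rewrite sum_to_scal.
    apply (Rmult_le_reg_l q); [lra|].
    rewrite <- Rmult_assoc, Rinv_r, Rmult_1_l by lra; lra.
  - intros b Hb; apply Hb; exists 1; split.
    + rewrite <- breakpoint_first, <- breakpoint_last, <- qlow_last, <- breakpoint_low by lia.
      split; apply breakpoint_le; lia.
    + unfold psi; rewrite Rinv_1; apply sum_to_ext; intros k Hk.
      rewrite P_at_one by lia; ring.
Qed.

Lemma psi_lub j : (1 <= j)%nat -> (j <= n - 1)%nat ->
  is_lub (fun x => exists q, INR n * a 1%nat <= q <= INR n * a n /\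
                      x = psi j (fun k => / q * P q k))
         (INR j / INR n).
Proof.
  intros Hj1 Hj2; pose proof start_pos.
  assert (0 < INR n) by (apply lt_0_INR; lia); split.
  - intros x [q [Hq ->]]; destruct (P_G1 q Hq) as [_ [Hmono Hsum]].
    pose proof (prefix_average_le (P q) j n ltac:(lia) Hmono) as Havg; rewrite Hsum in Havg.
    unfold psi; rewrite sum_to_scal.
    replace (/ q * sum_to (P q) j) with (INR n * sum_to (P q) j / (INR n * q)) by (field; lra).
    replace (INR j / INR n) with (INR j * q / (INR n * q)) by (field; lra).
    apply Rmult_le_compat_r; [left; apply Rinv_0_lt_compat; nra | exact Havg].
  - intros b Hb; apply Hb; exists (INR n * a 1%nat); split.
    + split; [lra|]; rewrite <- breakpoint_first, <- breakpoint_last; apply breakpoint_le; lia.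
    + unfold psi; rewrite (sum_to_ext _ (fun _ => / (INR n * a 1%nat) * a 1%nat))
        by (intros k Hk; rewrite P_at_start by lia; reflexivity).
      rewrite sum_to_const; assert (0 < a 1%nat) by (apply a_pos; lia); field; lra.
Qed.

End TheMap.

Theorem mainTheorem8 (n : nat) (a : nat -> R) (P : R -> nat -> R) :
  (2 <= n)%nat ->
  in_Delta n a ->
  P_conditions n a P ->
  gen_n_system n (INR n * a 1%nat) (INR n * a n) P /\
  (forall j, (1 <= j)%nat -> (j <= n - 1)%nat ->
     is_glb (fun x => exists q, INR n * a 1%nat <= q <= INR n * a n /\
                         x = psi j (fun k => / q * P q k))
            (psi j a) /\
     is_lub (fun x => exists q, INR n * a 1%nat <= q <= INR n * a n /\
                         x = psi j (fun k => / q * P q k))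
            (INR j / INR n)).
Proof.
  intros Hn Ha HP; split; [apply P_gen_n_system; assumption|].
  intros j Hj1 Hj2; split; [apply psi_glb | apply psi_lub]; assumption.
Qed.
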